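(* For all $n,r\in\mathbb{N}$, the statistics $\operatorname{veh}$ and $\operatorname{des}$ have the same distribution over $\mathfrak{S}_n^r$, i.e. $\sum_{\pi\in\mathfrak{S}_n^r}t^{\operatorname{veh}(\pi)}=\sum_{\pi\in\mathfrak{S}_n^r}t^{\operatorname{des}(\pi)}$.
   Context: The stack-sorting operator $S$ on words with distinct positive integer letters: $S$ of the empty word is empty; if $w=LmR$ with $m$ the greatest letter, $S(w)=S(L)S(R)m$. $\mathfrak{S}_n^r=\{\pi\in\mathfrak{S}_n:S^r(\pi)=12\cdots n\}$. For $\pi=a_1\cdots a_n$, $\operatorname{des}(\pi)=|\{i\in[n-1]:a_i>a_{i+1}\}|$. The unordered decreasing tree $T(w;\infty)$ ($\infty$ larger than all letters): a single vertex $\infty$ if $w$ is empty; otherwise $w=m_1w_1\cdots m_kw_k$ with $m_i$ the left-to-right maxima, and $T(w;\infty)$ has root $\infty$ with subtrees $T(w_i;m_i)$ (same construction with root labeled $m_i$). $\operatorname{veh}(\pi)$ is the number of non-root vertices of even height (root at height $0$) in $T(\pi;\infty)$. *)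

From mathcomp Require Import all_boot all_order all_algebra all_fingroup.
Set Implicit Arguments. Unset Strict Implicit. Unset Printing Implicit Defensive.

(* Words are sequences of positive naturals with distinct letters. *)

(* Stack-sorting S (fuel-based; fuel = size w suffices since every recursive
   call is on a strictly shorter word).
   S(empty) = empty; S(L m R) = S(L) S(R) m, m = greatest letter. *)
Fixpoint ssort_aux (fuel : nat) (w : seq nat) : seq nat :=
  match fuel with
  | 0 => [::]
  | f.+1 =>
    match w with
    | [::] => [::]
    | _ :: _ =>
      let m := \max_(x <- w) x in
      let i := index m w in
      ssort_aux f (take i w) ++ ssort_aux f (drop i.+1 w) ++ [:: m]
    end
  end.
Definition ssort (w : seq nat) : seq nat := ssort_aux (size w) w.

Definition pword n (p : 'S_n) : seq nat := [seq (p i).+1 : nat | i <- enum 'I_n].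

(* pi is in S_n^r iff S^r(pi) = 12...n *)
Definition sorted_in (r : nat) (w : seq nat) : bool :=
  iter r ssort w == iota 1 (size w).

Definition des (w : seq nat) : nat :=
  \sum_(i < (size w).-1) (nth 0 w i > nth 0 w i.+1).

(* Rooted plane trees with labels; None stands for the label oo. *)
Inductive dtree := DNode of option nat & seq dtree.

(* forest of subtrees of T(w; .): w = m_1 w_1 ... m_k w_k with m_i the
   left-to-right maxima; subtrees T(w_i; m_i). *)
Fixpoint lr_forest (fuel : nat) (w : seq nat) : seq dtree :=
  match fuel with
  | 0 => [::]
  | f.+1 =>
    match w with
    | [::] => [::]
    | m :: rest =>
      let k := find (fun x => m < x) rest in
      DNode (Some m) (lr_forest f (take k rest)) :: lr_forest f (drop k rest)
    end
  end.

Definition dec_tree (w : seq nat) : dtree := DNode None (lr_forest (size w) w).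

Fixpoint count_even_nonroot (t : dtree) (h : nat) : nat :=
  let: DNode _ ts := t in
  ((0 < h) && ~~ odd h) + sumn (map (fun t' => count_even_nonroot t' h.+1) ts).

Definition veh (w : seq nat) : nat := count_even_nonroot (dec_tree w) 0.

From mathcomp Require Import all_boot all_order all_algebra all_fingroup.
From mathcomp Require Import zify.

Set Implicit Arguments.
Unset Strict Implicit.
Unset Printing Implicit Defensive.

(** Everything decomposes along the largest letter: for [w = L m R] with all
    letters of [L] and [R] below [m], S(w) = S(L) S(R) m,
    des(w) = des(L) + [R <> []] + des(R), and the forest of T(w; oo) is the
    forest of [L] followed by the vertex [m] carrying the forest of [R] one
    level deeper.  The map [phi] rebuilds a word along this decomposition: it
    keeps the shape [L m R] when both sides are nonempty and otherwise puts [m]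
    first or last, a choice invisible to S, so as to create a descent exactly
    when the parity of the height requires one.  Hence [phi] commutes with S,
    turns veh into des, and has a left inverse [psi], so it permutes each
    S_n while preserving membership in S_n^r. *)

Definition below (m : nat) (s : seq nat) := all (fun x => x < m) s.

Lemma below_notin m s : below m s -> m \notin s.
Proof. by move=> /allP lt_s; apply/negP => /lt_s; rewrite ltnn. Qed.

Definition max_letter (w : seq nat) := \max_(x <- w) x.
Definition left_of_max (w : seq nat) := take (index (max_letter w) w) w.
Definition right_of_max (w : seq nat) := drop (index (max_letter w) w).+1 w.

Lemma max_letter_mem w : w != [::] -> max_letter w \in w.
Proof.
rewrite /max_letter; elim: w => [|a w IH] // _; rewrite big_cons in_cons.
have [->|/IH w_max] := eqVneq w [::]; first by rewrite big_nil maxn0 eqxx.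
by case: leqP => _; rewrite ?w_max ?orbT ?eqxx.
Qed.

Lemma size_left_of_max w : w != [::] -> size (left_of_max w) < size w.
Proof.
move=> /max_letter_mem; rewrite -index_mem /left_of_max size_take => lt_i.
by rewrite lt_i.
Qed.

Lemma size_right_of_max w : w != [::] -> size (right_of_max w) < size w.
Proof. by case: w => // a w _; rewrite /right_of_max size_drop /=; lia. Qed.

Lemma max_letter_cat X m Y : below m X -> below m Y ->
  [/\ max_letter (X ++ m :: Y) = m, left_of_max (X ++ m :: Y) = X
    & right_of_max (X ++ m :: Y) = Y].
Proof.
move=> ltX ltY; have max_m : max_letter (X ++ m :: Y) = m.
  apply/eqP; rewrite eqn_leq leq_bigmax_seq ?mem_cat ?mem_head ?orbT // andbT.
  apply/bigmax_leqP_seq => x; rewrite mem_cat in_cons.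
  by case/or3P => [/(allP ltX)/ltnW | /eqP-> | /(allP ltY)/ltnW].
rewrite /left_of_max /right_of_max max_m index_cat (negbTE (below_notin ltX)).
by rewrite /= eqxx addn0 take_size_cat // -cat_rcons drop_size_cat ?size_rcons.
Qed.

Lemma uniq_max_ind (P : seq nat -> Prop) : P [::] ->
  (forall X m Y, below m X -> below m Y -> uniq X -> uniq Y -> P X -> P Y ->
     P (X ++ m :: Y)) ->
  forall w, uniq w -> P w.
Proof.
move=> P0 Psplit w; elim: {w}(size w).+1 {-2}w (ltnSn (size w)) => // n IH w.
have [-> _ _ //|/max_letter_mem] := eqVneq w [::].
have m_ge x : x \in w -> x <= max_letter w by move=> wx; apply: leq_bigmax_seq.
move: (max_letter w) m_ge => m m_ge wm; case/splitPr: wm m_ge => X Y m_ge.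
rewrite size_cat /= addnS ltnS cat_uniq /=.
move=> le_n /and3P[uX /norP[mX _] /andP[mY uY]].
have below_m Z : {subset Z <= X ++ m :: Y} -> m \notin Z -> below m Z.
  move=> subZ mZ; apply/allP => x xZ; rewrite ltn_neqAle m_ge ?subZ // andbT.
  by apply: contraNneq mZ => <-.
apply: Psplit => //; first [apply: below_m | apply: IH] => //.
- by move=> x xX; rewrite mem_cat xX.
- by move=> x xY; rewrite mem_cat in_cons xY !orbT.
- exact: leq_ltn_trans (leq_addr _ _) le_n.
- exact: leq_ltn_trans (leq_addl _ _) le_n.
Qed.

Section MaxRecursion.

Variable A : Type.
Variable node :
  A -> seq nat -> seq nat -> nat -> (A -> seq nat -> seq nat) -> seq nat.
Hypothesis node_local : forall a L R m rec1 rec2,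
  (forall b, rec1 b L = rec2 b L) -> (forall b, rec1 b R = rec2 b R) ->
  node a L R m rec1 = node a L R m rec2.

Fixpoint maxrec_aux (fuel : nat) (a : A) (w : seq nat) : seq nat :=
  match fuel, w with
  | 0, _ | _, [::] => [::]
  | f.+1, _ :: _ =>
      node a (left_of_max w) (right_of_max w) (max_letter w) (maxrec_aux f)
  end.

Lemma maxrec_aux_fuel f g a w :
  size w <= f -> size w <= g -> maxrec_aux f a w = maxrec_aux g a w.
Proof.
elim: f g a w => [|f IH] [|g] a [|x w] //= le_f le_g.
have := size_left_of_max (isT : x :: w != [::]).
have := size_right_of_max (isT : x :: w != [::]).
by rewrite /= => lt_r lt_l; apply: node_local => b; apply: IH; lia.
Qed.

Definition maxrec (a : A) (w : seq nat) := maxrec_aux (size w) a w.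

Lemma maxrec_split a X m Y : below m X -> below m Y ->
  maxrec a (X ++ m :: Y) = node a X Y m maxrec.
Proof.
move=> ltX ltY; have [max_m left_X right_Y] := max_letter_cat ltX ltY.
rewrite /maxrec size_cat /= addnS; case E : (X ++ m :: Y) => [|x w].
  by move/(congr1 size): E; rewrite size_cat addnS.
rewrite /= -E max_m left_X right_Y; apply: node_local => b.
  by apply: maxrec_aux_fuel => //; apply: leq_addr.
by apply: maxrec_aux_fuel => //; apply: leq_addl.
Qed.

End MaxRecursion.

Definition ssort_node (_ : unit) (L R : seq nat) (m : nat)
    (rec : unit -> seq nat -> seq nat) :=
  rec tt L ++ rec tt R ++ [:: m].

Lemma ssort_maxrec w : ssort w = maxrec ssort_node tt w.
Proof.
rewrite /ssort /maxrec; move: (size w) => f.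
by elim: f w => [|f IH] [|x w] //=; rewrite !IH.
Qed.

Lemma ssort_split X m Y : below m X -> below m Y ->
  ssort (X ++ m :: Y) = ssort X ++ ssort Y ++ [:: m].
Proof.
move=> ltX ltY; rewrite !ssort_maxrec maxrec_split //.
by move=> a L R m' rec1 rec2 eqL eqR; rewrite /ssort_node eqL eqR.
Qed.

Lemma ssort_cons m Z : below m Z -> ssort (m :: Z) = ssort Z ++ [:: m].
Proof. by move=> ltZ; rewrite -[m :: Z]cat0s ssort_split. Qed.

Lemma ssort_rcons m Z : below m Z -> ssort (Z ++ [:: m]) = ssort Z ++ [:: m].
Proof. by move=> ltZ; rewrite ssort_split //= cats0. Qed.

(* The flag [e] is [true] when the forest of the current subword hangs at
   even height (see [count_even_forest_phi]). *)
Definition phi_node (e : bool) (L R : seq nat) (m : nat)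
    (rec : bool -> seq nat -> seq nat) :=
  if (L != [::]) && (R != [::]) then rec e L ++ m :: rec (~~ e) R
  else let e' := if L == [::] then ~~ e else e in
       if e' then m :: rec e' (L ++ R) else rec e' (L ++ R) ++ [:: m].

Definition psi_node (e : bool) (X Y : seq nat) (m : nat)
    (rec : bool -> seq nat -> seq nat) :=
  if (X != [::]) && (Y != [::]) then rec e X ++ m :: rec (~~ e) Y
  else if Y == [::] then (if e then m :: rec false X else rec false X ++ [:: m])
  else (if e then rec true Y ++ [:: m] else m :: rec true Y).

Definition phi := maxrec phi_node.
Definition psi := maxrec psi_node.

Lemma phi_split e X m Y : below m X -> below m Y ->
  phi e (X ++ m :: Y) = phi_node e X Y m phi.
Proof.
apply: maxrec_split => {}e L R {}m rec1 rec2 eqL eqR; rewrite /phi_node.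
by case: L eqL => [|x L] eqL; case: R eqR => [|y R] eqR; rewrite ?cats0 ?eqL ?eqR.
Qed.

Lemma psi_split e X m Y : below m X -> below m Y ->
  psi e (X ++ m :: Y) = psi_node e X Y m psi.
Proof.
apply: maxrec_split => {}e L R {}m rec1 rec2 eqL eqR; rewrite /psi_node.
by case: L eqL => [|x L] eqL; case: R eqR => [|y R] eqR; rewrite ?eqL ?eqR.
Qed.

Lemma psi_cons e m Z : below m Z -> psi e (m :: Z) = psi_node e [::] Z m psi.
Proof. by move=> ltZ; rewrite -[m :: Z]cat0s psi_split. Qed.

Lemma psi_rcons e m Z : below m Z ->
  psi e (Z ++ [:: m]) = psi_node e Z [::] m psi.
Proof. by move=> ltZ; rewrite psi_split. Qed.

Lemma phi_perm e w : uniq w -> perm_eq (phi e w) w.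
Proof.
move=> uw; move: w uw e; apply: uniq_max_ind => // X m Y ltX ltY _ _ IHX IHY e.
rewrite phi_split // /phi_node.
case: X {ltX} IHX => [|x X] IHX; case: Y {ltY} IHY => [|y Y] IHY /=.
- by case: e.
- by case: e; rewrite /= ?perm_cons // perm_catC /= perm_cons.
- rewrite cats0; case: e; rewrite /= -cat_cons ?perm_cat2r //.
  by rewrite -[m :: _]/([:: m] ++ _) perm_catC perm_cat2r.
- by rewrite -cat_cons perm_cat ?perm_cons.
Qed.

Lemma size_phi e w : uniq w -> size (phi e w) = size w.
Proof. by move=> uw; apply: perm_size (phi_perm e uw). Qed.

Lemma phi_eq0 e w : uniq w -> (phi e w == [::]) = (w == [::]).
Proof. by move=> uw; rewrite -!size_eq0 size_phi. Qed.

Lemma below_phi e m w : uniq w -> below m w -> below m (phi e w).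
Proof. by move=> uw; rewrite /below (perm_all _ (phi_perm e uw)). Qed.

Lemma ssort_phi e w : uniq w -> ssort (phi e w) = ssort w.
Proof.
move=> uw; move: w uw e; apply: uniq_max_ind => // X m Y ltX ltY uX uY IHX IHY e.
have ltX' b := below_phi b uX ltX; have ltY' b := below_phi b uY ltY.
rewrite phi_split // /phi_node ssort_split //.
case: X {ltX uX} ltX' IHX => [|x X] ltX' IHX;
  case: Y {ltY uY} ltY' IHY => [|y Y] ltY' IHY /=.
- by case: e; rewrite /= ssort_cons.
- by case: e; rewrite /= ?[LHS]ssort_rcons ?[LHS]ssort_cons ?IHY.
- by rewrite cats0; case: e; rewrite /= ?[LHS]ssort_rcons ?[LHS]ssort_cons ?IHX.
- by rewrite [LHS]ssort_split ?IHX ?IHY.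
Qed.

Lemma psi_phi e w : uniq w -> psi e (phi e w) = w.
Proof.
move=> uw; move: w uw e; apply: uniq_max_ind => // X m Y ltX ltY uX uY IHX IHY e.
have ltX' b := below_phi b uX ltX; have ltY' b := below_phi b uY ltY.
rewrite phi_split // /phi_node.
case: X {ltX} uX ltX' IHX => [|x X] uX ltX' IHX;
  case: Y {ltY} uY ltY' IHY => [|y Y] uY ltY' IHY /=.
- by case: e; rewrite /= ?psi_cons ?psi_rcons.
- by case: e; rewrite /= ?psi_rcons ?psi_cons // /psi_node phi_eq0 //= IHY.
- rewrite cats0; case: e;
    by rewrite /= ?psi_rcons ?psi_cons // /psi_node phi_eq0 //= IHX.
- by rewrite psi_split // /psi_node !phi_eq0 //= IHX IHY.
Qed.

Lemma des_nil : des [::] = 0.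
Proof. by rewrite /des big_ord0. Qed.

Lemma des_cons a s :
  des (a :: s) = (if s is b :: _ then b < a else false) + des s.
Proof. by rewrite /des; case: s => [|b s]; rewrite ?big_ord0 //= big_ord_recl. Qed.

Lemma des_split X m Y : below m X -> below m Y ->
  des (X ++ m :: Y) = des X + (Y != [::]) + des Y.
Proof.
move=> ltX ltY; elim: X ltX => [_|a X IH /andP[lt_am ltX]] /=.
  by rewrite des_cons des_nil; case: Y ltY => [|b Y] //= /andP[-> _].
rewrite des_cons IH // [des (a :: X)]des_cons !addnA.
by case: X {IH} ltX => //= _; rewrite ltnNge (ltnW lt_am) des_nil.
Qed.

Lemma des_cons_max m Z : below m Z -> des (m :: Z) = (Z != [::]) + des Z.
Proof. by move=> ltZ; rewrite -[m :: Z]cat0s des_split // des_nil. Qed.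

Lemma des_rcons_max m Z : below m Z -> des (Z ++ [:: m]) = des Z.
Proof. by move=> ltZ; rewrite des_split // des_nil !addn0. Qed.

Definition forest (w : seq nat) := lr_forest (size w) w.

Lemma lr_forest_fuel f g w :
  size w <= f -> size w <= g -> lr_forest f w = lr_forest g w.
Proof.
elim: f g w => [|f IH] [|g] [|a w] //= le_f le_g; set k := find _ w.
have le_take : size (take k w) <= size w by rewrite size_take_min geq_minr.
have le_drop : size (drop k w) <= size w by rewrite size_drop leq_subr.
by rewrite !(IH g) //; lia.
Qed.

Lemma forest_cons a w : forest (a :: w) =
  DNode (Some a) (forest (take (find (fun x => a < x) w) w)) ::
  forest (drop (find (fun x => a < x) w) w).
Proof.
rewrite /forest /=; congr (DNode _ _ :: _); apply: lr_forest_fuel => //.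
  by rewrite size_take_min geq_minr.
by rewrite size_drop leq_subr.
Qed.

Lemma forest_split L m R : below m L -> below m R ->
  forest (L ++ m :: R) = forest L ++ [:: DNode (Some m) (forest R)].
Proof.
move=> + ltR; elim: {L}(size L).+1 {-2}L (ltnSn (size L)) => // n IH [|a L] le_n.
  move=> _; rewrite forest_cons hasNfind ?take_size ?drop_size //.
  by apply/hasPn => x /(allP ltR) /ltnW; rewrite leqNgt.
move=> /andP[lt_am ltL]; rewrite cat_cons forest_cons.
have -> : find (fun x => a < x) (L ++ m :: R) = find (fun x => a < x) L.
  by rewrite find_cat /= lt_am addn0; case: ifP => // /negbT /hasNfind.
set k := find _ L; have le_k : k <= size L := find_size _ L.
have drop_k : drop k (L ++ m :: R) = drop k L ++ m :: R.
  rewrite drop_cat; case: ltnP => // le_Lk.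
  have -> : k = size L by apply/eqP; rewrite eqn_leq le_k.
  by rewrite subnn drop_size.
rewrite takel_cat // drop_k IH //.
- by rewrite forest_cons.
- by rewrite size_drop; apply: leq_ltn_trans (leq_subr _ _) _.
- by apply/allP => x /mem_drop /(allP ltL).
Qed.

Definition count_even_forest (ts : seq dtree) (h : nat) :=
  sumn [seq count_even_nonroot t h | t <- ts].

Lemma count_even_forest_split L m R h : below m L -> below m R ->
  count_even_forest (forest (L ++ m :: R)) h =
  count_even_forest (forest L) h + ((0 < h) && ~~ odd h)
  + count_even_forest (forest R) h.+1.
Proof.
move=> ltL ltR; rewrite forest_split // /count_even_forest map_cat sumn_cat /=.
by rewrite addn0 addnA.
Qed.

Lemma count_even_forest_phi w h : uniq w -> 0 < h ->
  count_even_forest (forest w) h =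
  des (phi (~~ odd h) w) + ((w != [::]) && ~~ odd h).
Proof.
move=> uw; move: w uw h; apply: uniq_max_ind => [h _|]; first by rewrite des_nil.
move=> X m Y ltX ltY uX uY IHX IHY h h_gt0.
rewrite count_even_forest_split // IHX // IHY // phi_split // /phi_node h_gt0 /= negbK.
have ltX' b := below_phi b uX ltX; have ltY' b := below_phi b uY ltY.
case: X {IHX ltX} uX ltX' => [|x X] uX ltX';
  case: Y {IHY ltY} uY ltY' => [|y Y] uY ltY' /=.
- by case: (odd h); rewrite /= des_cons des_nil.
- by case: (odd h); rewrite /= ?des_cons_max ?des_rcons_max ?phi_eq0 //= des_nil; lia.
- rewrite cats0; case: (odd h);
    by rewrite /= ?des_cons_max ?des_rcons_max ?phi_eq0 //= des_nil; lia.
- by rewrite des_split ?phi_eq0 //; case: (odd h); rewrite /=; lia.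
Qed.

Lemma veh_phi w : uniq w -> veh w = des (phi false w).
Proof.
have -> : veh w = count_even_forest (forest w) 1 by [].
by move=> uw; rewrite count_even_forest_phi //= andbF addn0.
Qed.

Lemma phi_iota k n : phi false (iota k n) = iota k n.
Proof.
elim: n => [|n IH] //; rewrite -addn1 iotaD /=.
have lt_kn : below (k + n) (iota k n) by apply/allP => x; rewrite mem_iota; lia.
rewrite phi_split // /phi_node andbF.
by case: n {lt_kn} IH => // n IH; rewrite cats0 IH.
Qed.

Lemma sorted_in_phi r w : uniq w -> sorted_in r (phi false w) = sorted_in r w.
Proof.
move=> uw; rewrite /sorted_in size_phi //; case: r => [|r] /=; last first.
  by rewrite -!iterS !iterSr ssort_phi.
apply/eqP/eqP => [phi_w|w_iota]; last by rewrite {1}w_iota phi_iota.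
rewrite -[LHS](psi_phi false uw) phi_w -{1}(phi_iota 1 (size w)).
by rewrite psi_phi ?iota_uniq.
Qed.

Lemma perm_eq_map_self (T : eqType) (f : T -> T) (s : seq T) : uniq s ->
  {in s &, injective f} -> {in s, forall x, f x \in s} -> perm_eq (map f s) s.
Proof.
move=> us f_inj f_s; have ufs : uniq (map f s) by rewrite map_inj_in_uniq.
apply: uniq_perm => //; apply: (uniq_min_size ufs _ _).2; last by rewrite size_map.
by move=> _ /mapP[x xs ->]; apply: f_s.
Qed.

Lemma perm_map_phi_permutations s : uniq s ->
  perm_eq (map (phi false) (permutations s)) (permutations s).
Proof.
move=> us; have uw w : w \in permutations s -> uniq w.
  by rewrite mem_permutations => /perm_uniq ->.
apply: perm_eq_map_self; first exact: permutations_uniq.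
  by move=> u v /uw uu /uw uv eq_phi; rewrite -(psi_phi false uu) eq_phi psi_phi.
move=> w sw; rewrite mem_permutations (perm_trans (phi_perm false (uw w sw))) //.
by rewrite -mem_permutations.
Qed.

Lemma pword_inj n : injective (@pword n).
Proof.
move=> p q /eq_in_map eq_pq; apply/permP => i; apply: val_inj.
by have /eq_pq[] := mem_enum (mem 'I_n) i.
Qed.

Lemma perm_pword n (p : 'S_n) : perm_eq (pword p) (iota 1 n).
Proof.
have -> : iota 1 n = [seq (val i).+1 | i <- enum 'I_n].
  by rewrite -[1]/(1 + 0) iotaDl -val_enum_ord -map_comp.
rewrite /pword (map_comp (fun i : 'I_n => (val i).+1) p); apply: perm_map.
apply: perm_eq_map_self; first exact: enum_uniq.
  by move=> i j _ _; apply: perm_inj.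
by move=> i _; rewrite mem_enum.
Qed.

Lemma perm_pword_enum n :
  perm_eq [seq pword p | p <- index_enum {perm 'I_n}] (permutations (iota 1 n)).
Proof.
have u_pw : uniq [seq pword p | p <- index_enum {perm 'I_n}].
  by rewrite map_inj_uniq ?index_enum_uniq //; apply: pword_inj.
apply: uniq_perm => //; first exact: permutations_uniq.
apply: (uniq_min_size u_pw _ _).2.
  by move=> _ /mapP[p _ ->]; rewrite mem_permutations perm_pword.
rewrite size_map size_permutations ?iota_uniq // size_iota.
by rewrite /index_enum unlock -enumT -cardT card_Sn.
Qed.

Lemma big_Sn_pword (R : Type) (idx : R) (op : Monoid.com_law idx) n
    (P : pred (seq nat)) (F : seq nat -> R) :
  \big[op/idx]_(p : 'S_n | P (pword p)) F (pword p) =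
  \big[op/idx]_(w <- permutations (iota 1 n) | P w) F w.
Proof. by rewrite -(perm_big _ (perm_pword_enum n)) big_map. Qed.

Local Open Scope ring_scope.

Theorem corollary7p3 (n r : nat) :
  \sum_(p : 'S_n | sorted_in r (pword p)) ('X^(veh (pword p)) : {poly int})
  = \sum_(p : 'S_n | sorted_in r (pword p)) ('X^(des (pword p)) : {poly int}).
Proof.
rewrite (big_Sn_pword _ _ _ (fun w => 'X^(veh w))).
rewrite (big_Sn_pword _ _ _ (fun w => 'X^(des w))).
rewrite -[RHS](perm_big _ (perm_map_phi_permutations (iota_uniq 1 n))) big_map.
rewrite big_mkcond [RHS]big_mkcond; apply: eq_big_seq => w.
rewrite mem_permutations => /perm_uniq; rewrite iota_uniq => uw.
by rewrite sorted_in_phi // veh_phi.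
Qed.
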